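(* Let $w$ be a 2D-weight and $\mathfrak{K}_w$ the 2D-GWN operator associated with $w$. Then for every $\Phi\in\mathcal{S}^*(M)$, $$\mathfrak{K}_w\Phi=\sum_{j,k=0}^\infty w(j,k)\,\mathfrak{a}_k^\dagger\mathfrak{a}_j\mathfrak{a}_j^\dagger\mathfrak{a}_k\Phi,$$ where the double series converges naturally, i.e. the square partial sums $\sum_{j,k=0}^n w(j,k)\mathfrak{a}_k^\dagger\mathfrak{a}_j\mathfrak{a}_j^\dagger\mathfrak{a}_k\Phi$ converge to $\mathfrak{K}_w\Phi$ in the strong topology of $\mathcal{S}^*(M)$ as $n\to\infty$.
   Context: Setting: $M$ a discrete-time normal martingale with the chaotic representation property; $Z_0=M_0$, $Z_n=M_n-M_{n-1}$; $\Gamma$ the finite subsets of $\mathbb{N}$, $Z_\emptyset=1$, $Z_\sigma=\prod_{j\in\sigma}Z_j$, an orthonormal basis of $\mathcal{L}^2(M)=L^2(\Omega,\sigma(M_n;n\ge0),P)$. $\lambda_\emptyset=1$, $\lambda_\sigma=\prod_{k\in\sigma}(k+1)$; $\mathcal{S}(M)=\{\xi\in\mathcal{L}^2(M):\sum_\sigma\lambda_\sigma^{2p}|\langle Z_\sigma,\xi\rangle|^2<\infty\ \forall p\ge0\}$ with the topology of these Hilbertian norms (countably Hilbertian nuclear), $\mathcal{S}^*(M)$ its dual with the strong topology. Fock transform $\widehat\Phi(\sigma)=\Phi(Z_\sigma)$ (determines $\Phi$). $\mathbf{1}_\sigma$ is the indicator of $\sigma$. A 2D-weight is a nonnegative $w$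 on $\mathbb{N}^2$ with $\sup_k\sum_jw(j,k)<\infty$; its spectral function is $\vartheta_w(\sigma)=\sum_j\mathbf{1}_\sigma(j)w(j,j)+\sum_{j,k}(1-\mathbf{1}_\sigma(j))\mathbf{1}_\sigma(k)w(j,k)$; the 2D-GWN operator $\mathfrak{K}_w$ is the unique continuous linear operator on $\mathcal{S}^*(M)$ with $\widehat{\mathfrak{K}_w\Phi}(\sigma)=\vartheta_w(\sigma)\widehat\Phi(\sigma)$. For $k\ge0$, $\mathfrak{a}_k,\mathfrak{a}_k^\dagger$ are the continuous linear operators on $\mathcal{S}^*(M)$ determined by $\widehat{\mathfrak{a}_k\Phi}(\sigma)=(1-\mathbf{1}_\sigma(k))\widehat\Phi(\sigma\cup\{k\})$ and $\widehat{\mathfrak{a}_k^\dagger\Phi}(\sigma)=\mathbf{1}_\sigma(k)\widehat\Phi(\sigma\setminus\{k\})$. *)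

From HB Require Import structures.
From mathcomp Require Import all_boot all_order all_algebra.
From mathcomp Require Import finmap.
From mathcomp Require Import complex.
From mathcomp Require Import boolp classical_sets functions reals constructive_ereal ereal esum.
Set Implicit Arguments. Unset Strict Implicit. Unset Printing Implicit Defensive.
Import Order.TTheory GRing.Theory Num.Theory.
Local Open Scope ring_scope.
Local Open Scope classical_set_scope.
Local Open Scope complex_scope.
Local Open Scope ring_scope.

(* Gamma: the finite subsets of N (index set of the basis Z_sigma). *)
Definition Gamma := {fset nat}.

Section QWN.
Variable R : realType.
Local Notation C := R[i].

Definition cmod (z : C) : R := Normc.normc z.

Definition lam (s : Gamma) : R := \prod_(k <- s) (k.+1)%:R.

(* Via the chaotic representation property, xi in L^2(M) is identified with
   its coefficient family (<Z_sigma, xi>)_{sigma in Gamma}.  A "vector" is such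
   a family. *)
Definition vect := Gamma -> C.

Definition pnorm2 (p : nat) (x : vect) : \bar R :=
  (\esum_(s in [set: Gamma]) ((lam s ^+ (2 * p)) * cmod (x s) ^+ 2)%:E)%E.

Definition test (x : vect) : Prop := forall p : nat, (pnorm2 p x < +oo)%E.

Definition Zb (s : Gamma) : vect := fun t => if t == s then 1 else 0.

(* functionals on S(M); elements of S*(M) are the continuous linear ones *)
Definition GF := vect -> C.

Definition gen_functional (Phi : GF) : Prop :=
  (forall (a : C) (x y : vect), test x -> test y ->
     Phi (fun s => a * x s + y s) = a * Phi x + Phi y) /\
  (exists (p : nat) (c : R), forall x : vect, test x ->
     (((cmod (Phi x)) ^+ 2)%:E <= c%:E * pnorm2 p x)%E).

Definition fock (Phi : GF) (s : Gamma) : C := Phi (Zb s).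

Definition ind (s : Gamma) (j : nat) : R := (j \in s)%:R.

Definition weight2D (w : nat -> nat -> R) : Prop :=
  (forall j k, 0 <= w j k) /\
  (exists c : R, forall k, (\esum_(j in [set: nat]) (w j k)%:E <= c%:E)%E).

Definition vartheta (w : nat -> nat -> R) (s : Gamma) : R :=
  \sum_(j <- s) w j j +
  fine (\esum_(jk in [set: nat * nat])
          ((1 - ind s jk.1) * ind s jk.2 * w jk.1 jk.2)%:E)%E.

Definition is_GWN_op (w : nat -> nat -> R) (K : GF -> GF) : Prop :=
  forall Phi, gen_functional Phi ->
    gen_functional (K Phi) /\
    forall s, fock (K Phi) s = (vartheta w s)%:C * fock Phi s.

Definition is_annihilators (a : nat -> GF -> GF) : Prop :=
  forall k Phi, gen_functional Phi ->
    gen_functional (a k Phi) /\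
    forall s, fock (a k Phi) s = (1 - ind s k)%:C * fock Phi (s `|` [fset k])%fset.

Definition is_creators (ad : nat -> GF -> GF) : Prop :=
  forall k Phi, gen_functional Phi ->
    gen_functional (ad k Phi) /\
    forall s, fock (ad k Phi) s = (ind s k)%:C * fock Phi (s `\ k)%fset.

Definition bounded_set (B : set vect) : Prop :=
  (forall x, B x -> test x) /\
  (forall p : nat, exists c : R, forall x, B x -> (pnorm2 p x <= c%:E)%E).

(* convergence in the strong topology of S*(M): uniform convergence on
   bounded subsets of S(M) *)
Definition strong_cvg (u : nat -> GF) (Phi : GF) : Prop :=
  forall B : set vect, bounded_set B ->
  forall eps : R, 0 < eps -> exists N : nat, forall n, (N <= n)%N ->
    forall x, B x -> cmod (u n x - Phi x) <= eps.

End QWN.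

(* In Fock coordinates the square partial sum [S_n] multiplies [fock Phi s] by
   [vartheta_n(s) = \sum_(j, k <= n) w j k 1_s(k) (1 - 1_(s \ k)(j))], which lies in
   [[0, 2 c |s|]] (c bounding the column sums of w) and tends to [vartheta_w(s)].
   A generalized functional is recovered from its Fock transform by the expansion
   [F y = \sum_s y_s F(Z_s)], the finite partial sums converging by continuity.
   On a bounded set B the coefficients satisfy [|y_s| <= C_q lam_s^(-q)] uniformly for every q,
   and [|s| <= mu(s) lam_s^2] for a weight mu summable over Gamma; so the expansion of
   [(S_n - K_w) Phi] at y has a uniformly small tail, while its finitely many remaining terms
   converge by pointwise convergence of vartheta_n. *)

From HB Require Import structures.
From mathcomp Require Import all_boot all_order all_algebra.
From mathcomp Require Import finmap complex.
From mathcomp Require Import boolp classical_sets functions reals constructive_ereal ereal esum.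
From mathcomp Require Import cardinality fsbigop.
From mathcomp.algebra_tactics Require Import ring lra.
Set Implicit Arguments. Unset Strict Implicit. Unset Printing Implicit Defensive.
Import Order.TTheory GRing.Theory Num.Theory.
Local Open Scope ring_scope.
Local Open Scope complex_scope.
Local Open Scope classical_set_scope.

Section ComplexModulus.
Context {R : realType}.
Implicit Types z y : R[i].

Lemma cmod_ge0 z : 0 <= cmod z.
Proof. by case: z => a b; rewrite /cmod /= sqrtr_ge0. Qed.

Lemma cmod0 : cmod (0 : R[i]) = 0.
Proof. exact: Normc.normc0. Qed.

Lemma cmodM z y : cmod (z * y) = cmod z * cmod y.
Proof. exact: Normc.normcM. Qed.

Lemma ler_cmodD z y : cmod (z + y) <= cmod z + cmod y.
Proof. exact: le_normcD. Qed.

Lemma cmod_real (x : R) : cmod x%:C = `|x|.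
Proof. by rewrite /cmod /= expr0n /= addr0 sqrtr_sqr. Qed.

Lemma ler_cmod_sum (I : Type) (r : seq I) (f : I -> R[i]) :
  cmod (\sum_(i <- r) f i) <= \sum_(i <- r) cmod (f i).
Proof.
elim: r => [|a r IH]; first by rewrite !big_nil cmod0.
by rewrite !big_cons; apply: le_trans (ler_cmodD _ _) _; rewrite lerD2l.
Qed.

End ComplexModulus.

Section ExtendedSums.
Context {R : realType} {T : choiceType}.

Lemma le_fsum_esum (f : T -> \bar R) (A : {fset T}) :
  (\sum_(t <- A) f t <= \esum_(t in [set: T]) f t)%E.
Proof.
apply: esum_ge; exists [set` A]; first by split; [exact: finite_fset|].
by rewrite fsbig_finite ?set_fsetK //; exact: finite_fset.
Qed.

Lemma esum_small_tail (f : T -> R) :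
  (forall t, 0 <= f t) -> (\esum_(t in [set: T]) (f t)%:E < +oo)%E ->
  forall eps : R, 0 < eps -> exists A : {fset T}, forall G : {fset T},
    (forall t, t \in G -> t \notin A) -> \sum_(t <- G) f t <= eps.
Proof.
move=> f0 fin eps eps0.
set S := esum _ _ in fin.
have S0 : (0 <= S)%E by apply: esum_ge0 => t _; rewrite lee_fin.
have SE : S = (fine S)%:E by rewrite fineK // ge0_fin_numE.
have : ((fine S - eps)%:E < S)%E by rewrite {2}SE lte_fin ltrBlDr ltrDl.
move=> /ereal_sup_gt [_ [X [finX _] <-]].
rewrite fsbig_finite //= sumEFin lte_fin => HX.
exists (fset_set X) => G disG.
have := le_fsum_esum (fun t => (f t)%:E) (fset_set X `|` G)%fset.
rewrite -/S SE sumEFin lee_fin (big_fsetID _ (mem (fset_set X))) /=.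
have -> : [fset t in (fset_set X `|` G)%fset | t \in fset_set X]%fset = fset_set X.
  by apply/fsetP => t; rewrite !inE; case: (t \in fset_set X); rewrite ?andbF.
have -> : [fset t in (fset_set X `|` G)%fset | t \notin fset_set X]%fset = G.
  apply/fsetP => t; rewrite !inE; case: (boolP (t \in G)) => tG.
    by rewrite orbT /= disG.
  by rewrite orbF; case: (t \in fset_set X).
lra.
Qed.

End ExtendedSums.

Lemma esum_nat_partial (R : realType) (g : nat -> R) (r : R) :
  (forall j, 0 <= g j) -> \esum_(j in [set: nat]) (g j)%:E = r%:E ->
  (forall n, \sum_(j < n) g j <= r) /\
  (forall eps, 0 < eps -> exists N, forall n, (N <= n)%N -> r - eps <= \sum_(j < n) g j).
Proof.
move=> g0 gE; split.
  move=> n; rewrite -lee_fin -gE -sumEFin (@fsbig_ord _ _ _ n (fun j => (g j)%:E)).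
  by apply: esum_ge; exists `I_n => //; split => //; exact: finite_II.
move=> eps eps0.
have : ((r - eps)%:E < \esum_(j in [set: nat]) (g j)%:E)%E.
  by rewrite gE lte_fin ltrBlDr ltrDl.
move=> /ereal_sup_gt [_ [X [finX _] <-]].
rewrite fsbig_finite //= => HX.
exists (\max_(j <- fset_set X) j).+1 => n Nn.
rewrite -lee_fin -sumEFin; apply: (le_trans (ltW HX)).
have := lee_sum_fset_nat (f := fun j => (g j)%:E) (fset_set X) n xpredT.
rewrite big_mkord; apply => //; first by move=> i _; rewrite lee_fin.
move=> j /= jX; rewrite (leq_trans _ Nn) // ltnS.
exact: (leq_bigmax_seq (F := id) j jX).
Qed.

Section TestSpace.
Variable R : realType.
Implicit Types (s t : Gamma) (x y : vect R).

Lemma lam_ge1 s : 1 <= lam R s.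
Proof.
rewrite /lam; elim: (enum_fset s) => [|a r IH]; rewrite ?big_nil ?big_cons //.
by apply: mulr_ege1 => //; rewrite ler1n.
Qed.

Lemma lam_ge0 s : 0 <= lam R s.
Proof. exact: le_trans ler01 (lam_ge1 s). Qed.

Lemma pnorm2_term_ge0 p x s : 0 <= lam R s ^+ (2 * p) * cmod (x s) ^+ 2.
Proof. by rewrite mulr_ge0 ?exprn_ge0 ?cmod_ge0 ?lam_ge0. Qed.

Lemma pnorm2_ge0 p x : (0 <= pnorm2 p x)%E.
Proof. by apply: esum_ge0 => s _; rewrite lee_fin pnorm2_term_ge0. Qed.

Lemma pnorm2_fine p x : test x -> pnorm2 p x = (fine (pnorm2 p x))%:E.
Proof. by move=> tx; rewrite fineK // ge0_fin_numE ?pnorm2_ge0. Qed.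

Lemma pnorm2_ge_term p x s :
  ((lam R s ^+ (2 * p) * cmod (x s) ^+ 2)%:E <= pnorm2 p x)%E.
Proof.
have := le_fsum_esum (fun t => (lam R t ^+ (2 * p) * cmod (x t) ^+ 2)%:E) [fset s]%fset.
by rewrite big_seq_fset1.
Qed.

Lemma test_fin_support (A : {fset Gamma}) x :
  (forall t, t \notin A -> x t = 0) -> test x.
Proof.
move=> xA p; rewrite /pnorm2.
rewrite (eq_esum (b := fun t => if t \in [set` A] then
   (lam R t ^+ (2 * p) * cmod (x t) ^+ 2)%:E else 0%E)); last first.
  move=> t _; case: ifPn => // /negP tA; rewrite xA ?cmod0 ?expr0n ?mulr0 //.
  by apply/negP => tA'; apply: tA; rewrite inE.
rewrite -esum_mkcond esum_fset; first last.
- by move=> t _; rewrite lee_fin pnorm2_term_ge0.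
- exact: finite_fset.
by rewrite fsbig_finite ?set_fsetK ?finite_fset // sumEFin ltry.
Qed.

Lemma test0 : test (fun _ => 0 : R[i]).
Proof. by apply: (test_fin_support (A := fset0)). Qed.

Lemma test_Zb s : test (Zb R s).
Proof.
by apply: (test_fin_support (A := [fset s]%fset)) => t; rewrite inE /Zb => /negPf ->.
Qed.

Lemma test_le x y : (forall t, cmod (y t) <= cmod (x t)) -> test x -> test y.
Proof.
move=> yx tx p; apply: le_lt_trans (tx p); apply: le_esum => t _.
by rewrite lee_fin ler_wpM2l ?exprn_ge0 ?lam_ge0 // lerXn2r ?nnegrE ?cmod_ge0.
Qed.

Lemma pnorm2_Zb p s : pnorm2 p (Zb R s) = (lam R s ^+ (2 * p))%:E.
Proof.
rewrite /pnorm2 (eq_esum (b := fun t => if t \in [set s] then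
   (lam R t ^+ (2 * p) * cmod (Zb R s t) ^+ 2)%:E else 0%E)); last first.
  move=> t _; case: ifPn => // /negP ts; rewrite /Zb ifN ?cmod0 ?expr0n ?mulr0 //.
  by apply/negP => /eqP ts'; apply: ts; rewrite inE.
rewrite -esum_mkcond esum_set1 /Zb ?eqxx ?lee_fin ?pnorm2_term_ge0 //.
by rewrite /cmod /= expr1n expr0n addr0 sqrtr1 expr1n mulr1.
Qed.

Lemma sum_Zb x (A : {fset Gamma}) t :
  \sum_(s <- A) x s * Zb R s t = if t \in A then x t else 0.
Proof.
case: ifPn => tA.
  rewrite (big_fsetD1 t) //= /Zb eqxx mulr1 big_seq big1 ?addr0 // => s.
  by rewrite !inE => /andP [st _]; rewrite eq_sym (negPf st) mulr0.
rewrite big_seq big1 // => s sA; rewrite /Zb ifN ?mulr0 //.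
by apply/negP => /eqP ts; move: tA; rewrite ts sA.
Qed.

End TestSpace.

Section FockExpansion.
Variable R : realType.
Implicit Types (s t : Gamma) (x y : vect R) (F G : GF R).

Definition fock_expansion F : Prop :=
  forall y, test y -> forall eps : R, 0 < eps ->
  exists A : {fset Gamma}, forall A' : {fset Gamma}, (A `<=` A')%fset ->
    cmod (F y - \sum_(s <- A') y s * F (Zb R s)) <= eps.

Lemma gen_functional0 F : gen_functional F -> F (fun _ => 0) = 0.
Proof.
move=> [lin _]; have := lin 1 _ _ (test0 R) (test0 R).
have -> : (fun _ : Gamma => 1 * (0 : R[i]) + 0) = (fun _ => 0).
  by apply: funext => s; rewrite mulr0 addr0.
by rewrite mul1r => /(congr1 (fun z => z - F (fun _ => 0))); rewrite subrr addrK.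
Qed.

Lemma gen_functional_sum_Zb F y (r : seq Gamma) : gen_functional F ->
  F (fun t => \sum_(s <- r) y s * Zb R s t) = \sum_(s <- r) y s * F (Zb R s).
Proof.
move=> gF; have [lin _] := gF; elim: r => [|s0 r IH].
  rewrite big_nil -[RHS](gen_functional0 gF).
  by congr (F _); apply: funext => t; rewrite big_nil.
have tr : test (fun t => \sum_(s <- r) y s * Zb R s t).
  apply: (test_fin_support (A := [fset s | s in r]%fset)) => t tr.
  rewrite big_seq big1 // => s sr; rewrite /Zb ifN ?mulr0 //.
  by apply: contra tr => /eqP ->; apply/imfsetP; exists s.
have -> : (fun t => \sum_(s <- s0 :: r) y s * Zb R s t) =
    (fun t => y s0 * Zb R s0 t + \sum_(s <- r) y s * Zb R s t).
  by apply: funext => t; rewrite big_cons.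
by rewrite big_cons -IH lin //; exact: test_Zb.
Qed.

Lemma gen_functional_continuous F : gen_functional F ->
  exists p, forall eps : R, 0 < eps -> exists2 delta : R, 0 < delta &
    forall u, test u -> (pnorm2 p u <= delta%:E)%E -> cmod (F u) <= eps.
Proof.
move=> [_ [p [c bnd]]]; exists p => eps eps0.
exists (eps ^+ 2 / (`|c| + 1)); first by rewrite divr_gt0 ?exprn_gt0 // ltr_wpDl.
move=> u tu; have := bnd u tu; rewrite (pnorm2_fine p tu) -EFinM !lee_fin.
have := pnorm2_ge0 p u; rewrite (pnorm2_fine p tu) lee_fin.
set P := fine _ => P0 FP Pd.
have cP : c * P <= eps ^+ 2.
  apply: le_trans (ler_wpM2r P0 (ler_norm c)) _.
  apply: le_trans (ler_wpM2l (normr_ge0 c) Pd) _.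
  rewrite mulrA ler_pdivrMr ?ltr_wpDl // mulrC ler_wpM2l ?exprn_ge0 ?ltW //.
  by rewrite ltrDl.
have := cmod_ge0 (F u); set z := cmod (F u) => z0.
have : z ^+ 2 <= eps ^+ 2 by apply: le_trans FP cP.
move=> ?; nra.
Qed.

Lemma gen_functional_expansion F : gen_functional F -> fock_expansion F.
Proof.
move=> gF; have [p small] := gen_functional_continuous gF.
move=> y ty eps eps0; have [delta delta0 Fsmall] := small eps eps0.
pose f t := lam R t ^+ (2 * p) * cmod (y t) ^+ 2.
have [A tailA] := esum_small_tail (pnorm2_term_ge0 p y) (ty p) delta0.
exists A => A' AA'.
pose u t := if t \in A' then 0 else y t.
have tu : test u.
  by apply: test_le ty => t; rewrite /u; case: ifP; rewrite ?cmod0 ?cmod_ge0.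
have yE : y = (fun t => 1 * u t + \sum_(s <- A') y s * Zb R s t).
  by apply: funext => t; rewrite sum_Zb mul1r /u; case: ifP; rewrite ?add0r ?addr0.
have tA' : test (fun t => \sum_(s <- A') y s * Zb R s t).
  by apply: (test_fin_support (A := A')) => t tA; rewrite sum_Zb (negPf tA).
have [lin _] := gF.
rewrite {1}yE lin // mul1r gen_functional_sum_Zb // addrK; apply: Fsmall => //.
apply: ge_ereal_sup => _ [X [finX _] <-].
rewrite fsbig_finite //= sumEFin lee_fin.
rewrite (eq_bigr (fun t => if t \notin A' then f t else 0)); last first.
  move=> t _; rewrite /u /f; case: ifP => _ //=.
  by rewrite /cmod /= !expr0n /= addr0 sqrtr0 expr0n mulr0.
rewrite -big_mkcond /= big_fset_condE /=; apply: tailA => t.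
rewrite !inE => /andP [_]; apply: contra; exact: (fsubsetP AA').
Qed.

Lemma fock_expansion_add F G :
  fock_expansion F -> fock_expansion G -> fock_expansion (fun x => F x + G x).
Proof.
move=> eF eG y ty eps eps0.
have e2 : 0 < eps / 2 by rewrite divr_gt0.
have [A1 H1] := eF y ty _ e2; have [A2 H2] := eG y ty _ e2.
exists (A1 `|` A2)%fset => A' sub.
have := H1 _ (fsubset_trans (fsubsetUl A1 A2) sub).
have := H2 _ (fsubset_trans (fsubsetUr A1 A2) sub).
have -> : F y + G y - \sum_(s <- A') y s * (F (Zb R s) + G (Zb R s)) =
    (F y - \sum_(s <- A') y s * F (Zb R s)) + (G y - \sum_(s <- A') y s * G (Zb R s)).
  by under eq_bigr do rewrite mulrDr; rewrite big_split /=; ring.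
by move=> h2 h1; apply: le_trans (ler_cmodD _ _) _; lra.
Qed.

Lemma fock_expansion_scale (c : R[i]) F :
  fock_expansion F -> fock_expansion (fun x => c * F x).
Proof.
move=> eF y ty eps eps0.
have cpos : 0 < cmod c + 1 by rewrite ltr_wpDl ?cmod_ge0.
have [A H] := eF y ty _ (divr_gt0 eps0 cpos).
exists A => A' sub; have := H _ sub.
have -> : c * F y - \sum_(s <- A') y s * (c * F (Zb R s)) =
    c * (F y - \sum_(s <- A') y s * F (Zb R s)).
  by rewrite mulrBr mulr_sumr; congr (_ - _); apply: eq_bigr => s _; ring.
rewrite cmodM ler_pdivlMr //; set z := cmod (_ - _) => h.
have := cmod_ge0 c; have : 0 <= z by exact: cmod_ge0.
nra.
Qed.

Lemma fock_expansion_sub F G :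
  fock_expansion F -> fock_expansion G -> fock_expansion (fun x => F x - G x).
Proof.
move=> eF eG; have := fock_expansion_add eF (fock_expansion_scale (-1) eG).
by congr fock_expansion; apply: funext => x; rewrite mulN1r.
Qed.

Lemma fock_expansion_sum (I : Type) (r : seq I) (G : I -> GF R) :
  (forall i, fock_expansion (G i)) -> fock_expansion (fun x => \sum_(i <- r) G i x).
Proof.
move=> eG; elim: r => [|i r IH].
  move=> y ty eps eps0; exists fset0 => A' _.
  by rewrite big_nil big1 ?subrr ?cmod0 ?ltW // => s _; rewrite big_nil mulr0.
have -> : (fun x => \sum_(j <- i :: r) G j x) =
    (fun x => G i x + \sum_(j <- r) G j x).
  by apply: funext => x; rewrite big_cons.
exact: fock_expansion_add.
Qed.

End FockExpansion.

(* A weight summable over [Gamma] with [mu s * lam s ^+ 2 = 2 ^+ #|s|], hence dominating [#|s|]. *)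
Section SummableWeight.
Variable R : realType.
Implicit Types (s : Gamma) (G : {fset Gamma}).

Definition mu_atom (k : nat) : R := 2 / (k.+1)%:R ^+ 2.

Definition mu s : R := \prod_(k <- s) mu_atom k.

Lemma mu_atom_ge0 k : 0 <= mu_atom k.
Proof. by rewrite divr_ge0 ?exprn_ge0. Qed.

Lemma mu_ge0 s : 0 <= mu s.
Proof. by apply: prodr_ge0 => k _; exact: mu_atom_ge0. Qed.

Lemma mu_lam s : mu s * lam R s ^+ 2 = 2 ^+ size s.
Proof.
have -> : 2 ^+ size s = \prod_(k <- s) (2 : R).
  by rewrite big_const_seq count_predT iter_mulr mulr1.
rewrite /mu /lam -prodrXl -big_split /=.
by apply: eq_bigr => k _; rewrite /mu_atom mulrAC -mulrA mulfV ?mulr1.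
Qed.

Lemma size_le_mu_lam s : (size s)%:R <= mu s * lam R s ^+ 2.
Proof. by rewrite mu_lam -natrX ler_nat ltnW // ltn_expl. Qed.

Lemma sum_mu_le_prod N G : (forall s, s \in G -> forall k, k \in s -> (k < N)%N) ->
  \sum_(s <- G) mu s <= \prod_(k < N) (1 + mu_atom k).
Proof.
elim: N G => [|N IH] G GN.
  have G0 s : s \in G -> s = fset0.
    by move=> sG; apply/fsetP => k; rewrite inE; apply/negP => /(GN _ sG).
  rewrite big_ord0; case: (boolP (fset0 \in G)) => G0in.
    have -> : G = [fset fset0]%fset.
      by apply/fsetP => s; rewrite inE; apply/idP/eqP => [/G0|->].
    by rewrite big_seq_fset1 /mu big_seq_fset0.
  have -> : G = fset0.
    by apply/fsetP => s; rewrite inE; apply/negP => sG; move: G0in; rewrite -(G0 s sG) sG.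
  by rewrite big_seq_fset0.
rewrite (big_fsetID _ (fun s : Gamma => N \in s)) /= big_ord_recr /=.
set G1 := [fset s in G | N \in s]%fset; set G2 := [fset s in G | N \notin s]%fset.
set P := \prod_(k < N) _.
have P0 : 0 <= P by apply: prodr_ge0 => k _; rewrite addr_ge0 ?mu_atom_ge0.
have sumG2 : \sum_(s <- G2) mu s <= P.
  apply: IH => s; rewrite !inE => /andP [sG Ns] k ks.
  have := GN _ sG _ ks; rewrite ltnS leq_eqVlt => /orP [/eqP kN|//].
  by move: Ns; rewrite -kN ks.
have sumG1 : \sum_(s <- G1) mu s <= mu_atom N * P.
  have -> : \sum_(s <- G1) mu s = mu_atom N * \sum_(s <- G1) mu (s `\ N)%fset.
    rewrite mulr_sumr big_seq [in RHS]big_seq; apply: eq_bigr => s.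
    by rewrite !inE => /andP [_ Ns]; rewrite /mu (big_fsetD1 N).
  rewrite ler_wpM2l ?mu_atom_ge0 //.
  have inj : {in G1 &, injective (fun s : Gamma => (s `\ N)%fset)}.
    move=> s t; rewrite !inE => /andP [_ Ns] /andP [_ Nt] e.
    apply/fsetP => k; case: (eqVneq k N) => [->|kN]; first by rewrite Ns Nt.
    by have := congr1 (fun u => k \in u) e; rewrite /= !inE kN.
  have -> : \sum_(s <- G1) mu (s `\ N)%fset =
      \sum_(t <- [fset (s `\ N)%fset | s in G1]%fset) mu t by rewrite [RHS]big_imfset.
  apply: IH => t /imfsetP [s /= sG1 ->] k; rewrite !inE => /andP [kN ks].
  move: sG1; rewrite !inE => /andP [sG _].
  by have := GN _ sG _ ks; rewrite ltnS leq_eqVlt (negPf kN).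
rewrite mulrDr mulr1 mulrC; lra.
Qed.

Lemma prod_mu_atom_le N :
  \prod_(k < N.+1) (1 + mu_atom k) * (N.+2)%:R ^+ 2 <= 12 * (N.+1)%:R ^+ 2.
Proof.
elim: N => [|N IH]; first by rewrite big_ord_recr big_ord0 /mu_atom /= mul1r; lra.
rewrite big_ord_recr /= /mu_atom.
set Q := \prod_(i < N.+1) _ in IH *.
have Q0 : 0 <= Q by apply: prodr_ge0 => k _; rewrite addr_ge0 ?mu_atom_ge0.
have -> : (N.+3)%:R = N.+2%:R + 1 :> R by rewrite -natr1.
have e1 : (N.+1)%:R = N.+2%:R - 1 :> R by rewrite -[N.+2]addn1 natrD addrK.
rewrite e1 in IH; set m : R := N.+2%:R in IH *.
have m2 : 2 <= m by rewrite /m ler_nat.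
have m2_gt0 : 0 < m ^+ 2 by rewrite exprn_gt0 //; lra.
set iv := (m ^+ 2)^-1.
have miv : m ^+ 2 * iv = 1 by rewrite mulfV ?gt_eqF.
have iv0 : 0 <= iv by rewrite invr_ge0 ltW.
have step : Q * ((m ^+ 2 + 2) * (m + 1) ^+ 2) <= 12 * m ^+ 4.
  rewrite -(ler_pM2r m2_gt0).
  have : Q * m ^+ 2 * ((m ^+ 2 + 2) * (m + 1) ^+ 2) <=
      12 * (m - 1) ^+ 2 * ((m ^+ 2 + 2) * (m + 1) ^+ 2).
    by rewrite ler_wpM2r // mulr_ge0 // ?exprn_ge0 //; nra.
  have : 12 * (m - 1) ^+ 2 * ((m ^+ 2 + 2) * (m + 1) ^+ 2) =
      12 * m ^+ 2 * m ^+ 4 - 12 * (3 * m ^+ 2 - 2) by ring.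
  have : 0 <= 3 * m ^+ 2 - 2 by nra.
  have : Q * ((m ^+ 2 + 2) * (m + 1) ^+ 2) * m ^+ 2 =
      Q * m ^+ 2 * ((m ^+ 2 + 2) * (m + 1) ^+ 2) by ring.
  have : 12 * m ^+ 4 * m ^+ 2 = 12 * m ^+ 2 * m ^+ 4 by ring.
  lra.
have -> : 1 + 2 * iv = (m ^+ 2 + 2) * iv by rewrite [RHS]mulrDl miv.
have -> : Q * ((m ^+ 2 + 2) * iv) * (m + 1) ^+ 2 =
    Q * ((m ^+ 2 + 2) * (m + 1) ^+ 2) * iv by ring.
apply: le_trans (ler_wpM2r iv0 step) _.
have -> : 12 * m ^+ 4 * iv = 12 * m ^+ 2 * (m ^+ 2 * iv) by ring.
by rewrite miv mulr1.
Qed.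

Lemma prod_mu_atom_le12 N : \prod_(k < N) (1 + mu_atom k) <= 12.
Proof.
case: N => [|N]; first by rewrite big_ord0; lra.
have := prod_mu_atom_le N.
have : 0 <= \prod_(k < N.+1) (1 + mu_atom k).
  by apply: prodr_ge0 => k _; rewrite addr_ge0 ?mu_atom_ge0.
have : (N.+1)%:R <= (N.+2)%:R :> R by rewrite ler_nat.
have : 0 <= (N.+1)%:R :> R by [].
set Q := \prod_(k < N.+1) _; set a := (N.+1)%:R; set b := (N.+2)%:R.
nra.
Qed.

Lemma esum_mu_lt : (\esum_(s in [set: Gamma]) (mu s)%:E < +oo)%E.
Proof.
apply: (@le_lt_trans _ _ 12%:E); last exact: ltry.
apply: ge_ereal_sup => _ [X [finX _] <-].
rewrite fsbig_finite //= sumEFin lee_fin.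
pose N := (\max_(s <- fset_set X) \max_(k <- s) k).+1.
apply: le_trans (prod_mu_atom_le12 N); apply: sum_mu_le_prod => s sX k ks.
rewrite ltnS; apply: (@leq_trans (\max_(k <- s) k)).
  exact: (leq_bigmax_seq (F := id) k ks).
exact: (leq_bigmax_seq (F := fun s : Gamma => \max_(k <- s) k) s sX).
Qed.

End SummableWeight.

Section Vanishing.
Context {R : realType}.

Definition vanishing (u : nat -> R) : Prop :=
  forall eps : R, 0 < eps -> exists N, forall n, (N <= n)%N -> `|u n| <= eps.

Lemma vanishing_sum (I : Type) (r : seq I) (u : I -> nat -> R) :
  (forall i, vanishing (u i)) -> vanishing (fun n => \sum_(i <- r) u i n).
Proof.
move=> ui; elim: r => [|i r IH] eps eps0.
  by exists 0%N => n _; rewrite big_nil normr0 ltW.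
have e2 : 0 < eps / 2 by rewrite divr_gt0.
have [N1 H1] := ui i _ e2; have [N2 H2] := IH _ e2.
exists (maxn N1 N2) => n; rewrite geq_max => /andP [n1 n2].
rewrite big_cons; apply: le_trans (ler_normD _ _) _.
have := H1 _ n1; have := H2 _ n2; lra.
Qed.

Lemma vanishingZ (a : R) (u : nat -> R) : vanishing u -> vanishing (fun n => a * u n).
Proof.
move=> u0 eps eps0.
have a1 : 0 < `|a| + 1 by rewrite ltr_wpDl.
have [N HN] := u0 _ (divr_gt0 eps0 a1).
exists N => n /HN; rewrite normrM ler_pdivlMr // => h.
have := normr_ge0 a; have := normr_ge0 (u n); nra.
Qed.

End Vanishing.

Section SpectralFunction.
Variable R : realType.
Implicit Types (s : Gamma) (F : nat -> R).

Lemma sumr_const_seq (I : Type) (r : seq I) (x : R) : \sum_(i <- r) x = x * (size r)%:R.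
Proof. by rewrite big_const_seq count_predT iter_addr addr0 mulr_natr. Qed.

Lemma ind_ge0 s j : 0 <= ind R s j.
Proof. by rewrite /ind; case: (j \in s). Qed.

Lemma ind_le1 s j : ind R s j <= 1.
Proof. by rewrite /ind; case: (j \in s). Qed.

Lemma ind_compl_ge0 s j : 0 <= 1 - ind R s j.
Proof. by rewrite subr_ge0 ind_le1. Qed.

Lemma sum_ind F m s : (forall k, k \in s -> (k < m)%N) ->
  \sum_(k < m) ind R s k * F k = \sum_(k <- s) F k.
Proof.
move=> sm; rewrite -(big_mkord xpredT (fun k => ind R s k * F k)).
rewrite (eq_bigr (fun k => if k \in s then F k else 0)); last first.
  by move=> k _; rewrite /ind; case: (k \in s); rewrite ?mul1r ?mul0r.
rewrite -big_mkcond -big_filter; apply: perm_big.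
apply: uniq_perm; [by rewrite filter_uniq // iota_uniq | exact: fset_uniq |].
move=> k; rewrite mem_filter mem_iota add0n /=.
by case: (boolP (k \in s)) => //= ks; rewrite subn0 sm.
Qed.

Lemma sum_ind_le F m s : (forall k, 0 <= F k) ->
  \sum_(k < m) ind R s k * F k <= \sum_(k <- s) F k.
Proof.
move=> F0; pose m' := maxn m (\max_(k <- s) k).+1.
rewrite -(sum_ind F (m := m')); last first.
  move=> k ks; rewrite leq_max ltnS; apply/orP; right.
  exact: (leq_bigmax_seq (F := id) k ks).
rewrite -!(big_mkord xpredT (fun k => ind R s k * F k)).
rewrite [X in _ <= X](@big_cat_nat _ _ _ m) ?leq_maxl //=.
by rewrite lerDl sumr_ge0 // => k _; rewrite mulr_ge0 ?ind_ge0.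
Qed.

Variables (w : nat -> nat -> R) (c : R).
Hypothesis w_ge0 : forall j k, 0 <= w j k.
Hypothesis w_col : forall k, (\esum_(j in [set: nat]) (w j k)%:E <= c%:E)%E.

Lemma sum_col_le k m : \sum_(j < m) w j k <= c.
Proof.
rewrite -lee_fin; apply: le_trans (w_col k).
rewrite -sumEFin (@fsbig_ord _ _ _ m (fun j => (w j k)%:E)); apply: esum_ge.
by exists `I_m => //; split => //; exact: finite_II.
Qed.

Lemma diag_le k : w k k <= c.
Proof.
rewrite -lee_fin; apply: le_trans (w_col k).
by have := le_fsum_esum (fun j => (w j k)%:E) [fset k]%fset; rewrite big_seq_fset1.
Qed.

Lemma esum_vartheta_offdiag s :
  \esum_(jk in [set: nat * nat]) ((1 - ind R s jk.1) * ind R s jk.2 * w jk.1 jk.2)%:E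
  = \sum_(k <- s) \esum_(j in [set: nat]) ((1 - ind R s j) * w j k)%:E.
Proof.
have -> : [set: nat * nat] = [set: nat] `*`` (fun _ => [set: nat]) by apply/seteqP.
rewrite -(esum_esum (a := fun j k => ((1 - ind R s j) * ind R s k * w j k)%:E)); last first.
  by move=> j k _ _; rewrite lee_fin !mulr_ge0 ?ind_ge0 ?ind_compl_ge0.
rewrite -esum_sum; last by move=> j k _ _; rewrite lee_fin mulr_ge0 ?ind_compl_ge0.
apply: eq_esum => j _.
rewrite (eq_esum (b := fun k => if k \in [set` s] then ((1 - ind R s j) * w j k)%:E else 0%E)).
  rewrite -esum_mkcond esum_fset ?finite_fset //; last first.
    by move=> k _; rewrite lee_fin mulr_ge0 ?ind_compl_ge0.
  by rewrite fsbig_finite ?finite_fset // set_fsetK.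
move=> k _; rewrite mem_setE /ind; case: (k \in s).
  by rewrite mulr1.
by rewrite mulr0 mul0r.
Qed.

Definition vartheta_col s k : R :=
  fine (\esum_(j in [set: nat]) ((1 - ind R s j) * w j k)%:E).

Lemma esum_col_compl_bound s k :
  (0 <= \esum_(j in [set: nat]) ((1 - ind R s j) * w j k)%:E <= c%:E)%E.
Proof.
apply/andP; split.
  by apply: esum_ge0 => j _; rewrite lee_fin mulr_ge0 ?ind_compl_ge0.
apply: le_trans (w_col k); apply: le_esum => j _.
by rewrite lee_fin ler_piMl // lerBlDr lerDl ind_ge0.
Qed.

Lemma vartheta_colE s k :
  \esum_(j in [set: nat]) ((1 - ind R s j) * w j k)%:E = (vartheta_col s k)%:E.
Proof.
case/andP: (esum_col_compl_bound s k) => e0 ec.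
by rewrite /vartheta_col fineK // ge0_fin_numE // (le_lt_trans ec) ?ltry.
Qed.

Lemma vartheta_col_bound s k : 0 <= vartheta_col s k <= c.
Proof. by rewrite -!lee_fin -vartheta_colE esum_col_compl_bound. Qed.

Lemma varthetaE s :
  vartheta w s = \sum_(k <- s) w k k + \sum_(k <- s) vartheta_col s k.
Proof.
rewrite /vartheta esum_vartheta_offdiag; congr (_ + _).
by under eq_bigr do rewrite vartheta_colE; rewrite sumEFin.
Qed.

(* The Fock transform of the n-th square partial sum is this multiplier times [fock Phi]. *)
Definition vartheta_trunc n s : R :=
  \sum_(j < n.+1) \sum_(k < n.+1) w j k * (ind R s k * (1 - ind R (s `\ (k : nat))%fset j)).

Lemma vartheta_truncE n s : vartheta_trunc n s =
  \sum_(k < n.+1) ind R s k * (\sum_(j < n.+1) (1 - ind R s j) * w j k + w k k).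
Proof.
rewrite /vartheta_trunc exchange_big /=; apply: eq_bigr => k _.
rewrite (bigD1 k) //= [in RHS](bigD1 k) //=.
have -> : ind R (s `\ (k : nat))%fset k = 0 by rewrite /ind !inE eqxx.
have -> : \sum_(j < n.+1 | j != k) w j k * (ind R s k * (1 - ind R (s `\ (k : nat))%fset j)) =
    ind R s k * \sum_(j < n.+1 | j != k) (1 - ind R s j) * w j k.
  rewrite mulr_sumr; apply: eq_bigr => j jk.
  have -> : ind R (s `\ (k : nat))%fset j = ind R s j by rewrite /ind !inE jk.
  ring.
by rewrite /ind; case: ((k : nat) \in s) => /=; ring.
Qed.

Lemma vartheta_col_partial_le s k m :
  0 <= \sum_(j < m) (1 - ind R s j) * w j k + w k k <= 2 * c.
Proof.
apply/andP; split.
  by rewrite addr_ge0 ?sumr_ge0 // => j _; rewrite mulr_ge0 ?ind_compl_ge0.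
have : \sum_(j < m) (1 - ind R s j) * w j k <= c.
  apply: le_trans (sum_col_le k m); apply: ler_sum => j _.
  by rewrite ler_piMl // lerBlDr lerDl ind_ge0.
have := diag_le k; lra.
Qed.

Lemma vartheta_trunc_bound n s : 0 <= vartheta_trunc n s <= 2 * c * (size s)%:R.
Proof.
pose F k := \sum_(j < n.+1) (1 - ind R s j) * w j k + w k k.
have Fb k : 0 <= F k <= 2 * c by exact: vartheta_col_partial_le.
rewrite vartheta_truncE -/F; apply/andP; split.
  by rewrite sumr_ge0 // => k _; rewrite mulr_ge0 ?ind_ge0 //; case/andP: (Fb k).
apply: (@le_trans _ _ (\sum_(k <- s) F k)).
  by apply: sum_ind_le => k; case/andP: (Fb k).
by rewrite -sumr_const_seq; apply: ler_sum => k _; case/andP: (Fb k).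
Qed.

Lemma vartheta_bound s : 0 <= vartheta w s <= 2 * c * (size s)%:R.
Proof.
rewrite varthetaE -sumr_const_seq -big_split /=; apply/andP; split.
  apply: sumr_ge0 => k _; case/andP: (vartheta_col_bound s k) => ? _.
  by rewrite addr_ge0.
apply: ler_sum => k _; case/andP: (vartheta_col_bound s k) => _ ?.
have := diag_le k; lra.
Qed.

Lemma vartheta_trunc_dist n s :
  `|vartheta_trunc n s - vartheta w s| <= 2 * c * (size s)%:R.
Proof.
case/andP: (vartheta_trunc_bound n s) => ? ?; case/andP: (vartheta_bound s) => ? ?.
by rewrite ler_norml; apply/andP; split; lra.
Qed.

Lemma vartheta_trunc_cvg s : vanishing (fun n => vartheta_trunc n s - vartheta w s).
Proof.
pose d k n := \sum_(j < n.+1) (1 - ind R s j) * w j k - vartheta_col s k.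
have dk k : vanishing (d k).
  move=> e e0.
  have [le_col col_le] := esum_nat_partial (fun j => mulr_ge0 (ind_compl_ge0 s j) (w_ge0 j k))
    (vartheta_colE s k).
  have [N HN] := col_le e e0.
  exists N => n Nn; have := le_col n.+1; have := HN n.+1 (leqW Nn).
  by rewrite /d ler_norml => ? ?; apply/andP; split; lra.
move=> eps eps0; have [N HN] := vanishing_sum s dk eps0.
exists (maxn N (\max_(k <- s) k)) => n; rewrite geq_max => /andP [Nn sn].
rewrite vartheta_truncE (sum_ind (fun k => \sum_(j < n.+1) (1 - ind R s j) * w j k + w k k)); last first.
  move=> k ks; rewrite ltnS; apply: leq_trans sn.
  exact: (leq_bigmax_seq (F := id) k ks).
rewrite varthetaE.
have -> : \sum_(k <- s) (\sum_(j < n.+1) (1 - ind R s j) * w j k + w k k) -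
    (\sum_(k <- s) w k k + \sum_(k <- s) vartheta_col s k) = \sum_(k <- s) d k n.
  by rewrite big_split /= /d sumrB /=; ring.
exact: HN.
Qed.

End SpectralFunction.

Lemma fsetD1U1K (s : Gamma) (j k : nat) : k \in s -> j \notin (s `\ k)%fset ->
  ((((s `\ k) `|` [fset j]) `\ j) `|` [fset k])%fset = s.
Proof.
move=> ks js; apply/fsetP => t; rewrite !inE.
case: (eqVneq t k) => [->|tk]; first by rewrite orbT ks.
rewrite orbF /=; case: (eqVneq t j) => [tj|tj] /=; last by rewrite orbF.
by move: js; rewrite !inE -tj tk /= => /negPf ->.
Qed.

Section Estimates.
Variable R : realType.
Implicit Types (s : Gamma) (x : vect R) (Phi : GF R).

Lemma fock_bound Phi : gen_functional Phi ->
  exists p (C : R), 0 <= C /\ forall s, cmod (fock Phi s) <= C * lam R s ^+ (2 * p).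
Proof.
move=> [_ [p [c bnd]]]; exists p, (1 + `|c|); split; first by rewrite addr_ge0.
move=> s; have := bnd _ (test_Zb R s); rewrite pnorm2_Zb -EFinM lee_fin -/(fock Phi s).
have := exprn_ege1 (2 * p) (lam_ge1 R s); set L := lam R s ^+ _ => L1.
have := cmod_ge0 (fock Phi s); set z := cmod _ => z0 zc.
have : z <= 1 + z ^+ 2 by nra.
have : c * L <= `|c| * L by rewrite ler_wpM2r ?ler_norm // (le_trans ler01).
lra.
Qed.

Lemma bounded_set_coef_bound (B : set (vect R)) q : bounded_set B ->
  exists C : R, 0 <= C /\ forall x, B x -> forall s, cmod (x s) * lam R s ^+ q <= C.
Proof.
move=> [_ Bbd]; have [C BC] := Bbd q; exists (1 + `|C|); split.
  by rewrite addr_ge0.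
move=> x Bx s; have := le_trans (pnorm2_ge_term q x s) (BC x Bx); rewrite lee_fin.
have -> : lam R s ^+ (2 * q) * cmod (x s) ^+ 2 = (cmod (x s) * lam R s ^+ q) ^+ 2.
  by rewrite exprMn -exprM mulnC mulrC.
have : 0 <= cmod (x s) * lam R s ^+ q by rewrite mulr_ge0 ?cmod_ge0 ?exprn_ge0 ?lam_ge0.
set z := _ * _ => z0 zC.
have : z <= 1 + z ^+ 2 by nra.
have := ler_norm C; lra.
Qed.

(* Expanding [D n x] in the basis, the tail is controlled uniformly on [B] through the summable
   weight [mu], and the finitely many remaining coefficients through the pointwise convergence. *)
Lemma strong_vanishing (D : nat -> GF R) (q : nat) (M : R) :
  (forall n, fock_expansion (D n)) ->
  (forall s, vanishing (fun n => cmod (D n (Zb R s)))) ->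
  (forall n s, cmod (D n (Zb R s)) <= M * (mu R s * lam R s ^+ q)) ->
  forall B : set (vect R), bounded_set B ->
  forall eps : R, 0 < eps -> exists N, forall n, (N <= n)%N ->
    forall x, B x -> cmod (D n x) <= eps.
Proof.
move=> eD Dcvg Dbound B bB eps eps0.
have M0 : 0 <= M.
  have := Dbound 0%N fset0; rewrite /mu /lam !big_seq_fset0 expr1n !mulr1.
  exact: le_trans (cmod_ge0 _).
have [Cq [Cq0 xq]] := bounded_set_coef_bound q bB.
have [C0 [C00 x0]] := bounded_set_coef_bound 0 bB.
have e3 : 0 < eps / 3 by rewrite divr_gt0.
have MC1 : 0 < M * Cq + 1 by rewrite ltr_wpDl ?mulr_ge0.
have [A0 tailA0] := esum_small_tail (@mu_ge0 R) (esum_mu_lt R) (divr_gt0 e3 MC1).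
have [N HN] := vanishing_sum A0 (fun s => vanishingZ C0 (Dcvg s)) e3.
exists N => n Nn x Bx.
have [A1 HA1] := eD n x (bB.1 x Bx) _ e3.
set A' := (A1 `|` A0)%fset; set G := [fset t in A' | t \notin A0]%fset.
set f := fun s => x s * D n (Zb R s).
have A'E : \sum_(s <- A') f s = \sum_(s <- A0) f s + \sum_(s <- G) f s.
  have -> : A0 = [fset t in A' | t \in A0]%fset.
    by apply/fsetP => t; rewrite /A' !inE; case: (t \in A0); rewrite ?orbT ?andbF.
  exact: big_fsetID.
have sumA0 : cmod (\sum_(s <- A0) f s) <= eps / 3.
  apply: le_trans (ler_cmod_sum _ _) _; apply: le_trans (HN n Nn).
  rewrite ger0_norm; last by apply: sumr_ge0 => s _; rewrite mulr_ge0 ?cmod_ge0.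
  apply: ler_sum => s _; rewrite /f cmodM ler_wpM2r ?cmod_ge0 //.
  by have := x0 x Bx s; rewrite expr0 mulr1.
have sumG : cmod (\sum_(s <- G) f s) <= eps / 3.
  apply: le_trans (ler_cmod_sum _ _) _.
  apply: (@le_trans _ _ (\sum_(s <- G) M * Cq * mu R s)).
    apply: ler_sum => s _; rewrite /f cmodM.
    apply: le_trans (ler_wpM2l (cmod_ge0 _) (Dbound n s)) _.
    have -> : cmod (x s) * (M * (mu R s * lam R s ^+ q)) =
        M * mu R s * (cmod (x s) * lam R s ^+ q) by ring.
    by rewrite [M * Cq * _]mulrAC ler_wpM2l ?mulr_ge0 ?mu_ge0 ?xq.
  rewrite -mulr_sumr.
  have : \sum_(s <- G) mu R s <= eps / 3 / (M * Cq + 1).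
    by apply: tailA0 => t; rewrite !inE => /andP [].
  rewrite ler_pdivlMr // mulrDr mulr1 mulrC.
  have : 0 <= \sum_(s <- G) mu R s by apply: sumr_ge0 => s _; exact: mu_ge0.
  lra.
have := ler_cmodD (D n x - \sum_(s <- A') f s) (\sum_(s <- A') f s).
rewrite subrK; have := HA1 A' (fsubsetUl _ _).
rewrite A'E; have := ler_cmodD (\sum_(s <- A0) f s) (\sum_(s <- G) f s).
lra.
Qed.

End Estimates.

Section SquarePartialSums.
Variable R : realType.
Variables (w : nat -> nat -> R) (a ad : nat -> GF R -> GF R) (Phi : GF R).
Hypotheses (ha : is_annihilators a) (had : is_creators ad) (gPhi : gen_functional Phi).

Lemma fock_number_pair_op j k :
  gen_functional (ad k (a j (ad j (a k Phi)))) /\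
  forall s, fock (ad k (a j (ad j (a k Phi)))) s =
    (ind R s k * (1 - ind R (s `\ k)%fset j))%:C * fock Phi s.
Proof.
have [g1 f1] := ha k gPhi; have [g2 f2] := had j g1.
have [g3 f3] := ha j g2; have [g4 f4] := had k g3.
split => // s; rewrite f4 f3 f2 f1.
case: (boolP (k \in s)) => ks; last by rewrite /ind (negPf ks) /= !mul0r.
case: (boolP (j \in (s `\ k)%fset)) => js.
  by rewrite /ind js /= subrr mulr0 !mul0r mulr0.
rewrite fsetD1U1K // /ind ks (negPf js) !inE eqxx /=.
have -> : (k != j) && ((k != k) && (k \in s) || (k == j)) = false.
  by rewrite eqxx /=; case: (eqVneq k j).
by rewrite orbT /= !subr0 !mulr1 !mul1r.
Qed.

Definition square_partial_sum n : GF R := fun x =>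
  \sum_(j < n.+1) \sum_(k < n.+1) (w j k)%:C * ad k (a j (ad j (a k Phi))) x.

Lemma square_partial_sum_expansion n : fock_expansion (square_partial_sum n).
Proof.
apply: fock_expansion_sum => j; apply: fock_expansion_sum => k.
by apply: fock_expansion_scale; apply: gen_functional_expansion; case: (fock_number_pair_op j k).
Qed.

Lemma fock_square_partial_sum n s :
  square_partial_sum n (Zb R s) = (vartheta_trunc w n s)%:C * fock Phi s.
Proof.
rewrite /vartheta_trunc rmorph_sum mulr_suml; apply: eq_bigr => j _.
rewrite rmorph_sum mulr_suml; apply: eq_bigr => k _.
have [_ fjk] := fock_number_pair_op j k; rewrite -/(fock _ s) fjk.
by rewrite !rmorphM !mulrA.
Qed.

End SquarePartialSums.

Theorem theorem3p6 (R : realType) (w : nat -> nat -> R)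
  (K : GF R -> GF R) (a ad : nat -> GF R -> GF R) :
  weight2D w -> is_GWN_op w K -> is_annihilators a -> is_creators ad ->
  forall Phi : GF R, gen_functional Phi ->
    strong_cvg
      (fun n : nat => fun x : vect R =>
         \sum_(j < n.+1) \sum_(k < n.+1)
            (w j k)%:C * ad k (a j (ad j (a k Phi))) x)
      (K Phi).
Proof.
move=> [w_ge0 [c w_col]] hK ha had Phi gPhi.
have [gK fockK] := hK Phi gPhi.
have [p [C [C0 fockPhi]]] := fock_bound gPhi.
have c0 : 0 <= c.
  rewrite -lee_fin; apply: le_trans (w_col 0%N).
  by apply: esum_ge0 => j _; rewrite lee_fin.
pose D n x := square_partial_sum w a ad Phi n x - K Phi x.
have fockD n s : D n (Zb R s) = (vartheta_trunc w n s - vartheta w s)%:C * fock Phi s.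
  by rewrite /D fock_square_partial_sum // -/(fock _ s) fockK rmorphB mulrBl.
apply: (@strong_vanishing _ D (2 * p + 2) (2 * c * C)) => [n|s|n s].
- apply: fock_expansion_sub; last exact: gen_functional_expansion.
  exact: square_partial_sum_expansion.
- move=> e e0; have [N HN] := vanishingZ (cmod (fock Phi s)) (vartheta_trunc_cvg w_ge0 w_col s) e0.
  exists N => n /HN; rewrite fockD cmodM cmod_real !normrM normr_id.
  by rewrite (ger0_norm (cmod_ge0 _)) mulrC.
- rewrite fockD cmodM cmod_real exprD.
  have -> : 2 * c * C * (mu R s * (lam R s ^+ (2 * p) * lam R s ^+ 2)) =
      2 * c * (mu R s * lam R s ^+ 2) * (C * lam R s ^+ (2 * p)) by ring.
  apply: ler_pM; rewrite ?normr_ge0 ?cmod_ge0 ?fockPhi //.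
  apply: le_trans (vartheta_trunc_dist w_ge0 w_col n s) _.
  by rewrite ler_wpM2l ?mulr_ge0 ?size_le_mu_lam.
Qed.
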